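(* Let $\nu>0$, $\sigma>0$, $\varepsilon\in(-1,1)$ be fixed (known) and let $\rho(u)=\frac{\nu+1}{2}\log\big(1+\frac{u^2}{\nu(1-\operatorname{sign}(u)\varepsilon)^2}\big)$. For a sample $x_1,\dots,x_n$, let $T_n(x_1,\dots,x_n)$ be any minimizer over $t\in\mathbb{R}$ of $\sum_{i=1}^n\rho\big(\frac{x_i-t}{\sigma}\big)$ (the ML estimator of the location $\theta$ in $ESt(\theta,\sigma,\varepsilon,\nu)$ with $\sigma,\varepsilon,\nu$ known). Then the breakdown point of $T_n$ is $1/2$, in the sense that its finite-sample replacement breakdown point tends to $1/2$ as $n\to\infty$.
   Context: $\operatorname{sign}(t)=1$ for $t\ge0$, $-1$ for $t<0$. $\rho$ equals $-\log f_{ESt}$ up to an additive constant, where $f_{ESt}(x)\propto\big(1+\frac{(x-\theta)^2}{\nu(1-\operatorname{sign}(x-\theta)\varepsilon)^2\sigma^2}\big)^{-(\nu+1)/2}$. The finite-sample replacement breakdown point of $T_n$ at a sample $X$ is $\min\{m/n:\ \sup|T_n(X')|=\infty\}$, the supremum over all samples $X'$ obtained from $X$ by replacing $m$ of the $n$ points by arbitrary values. *)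

From Stdlib Require Import Reals Lra List.
Open Scope R_scope.

Definition sgn (t : R) : R := if Rle_dec 0 t then 1 else -1.

Definition rho (nu eps u : R) : R :=
  (nu + 1) / 2 * ln (1 + u ^ 2 / (nu * (1 - sgn u * eps) ^ 2)).

Definition objective (nu sigma eps : R) (x : list R) (t : R) : R :=
  fold_right (fun xi acc => rho nu eps ((xi - t) / sigma) + acc) 0 x.

Definition is_minimizer (nu sigma eps : R) (x : list R) (t : R) : Prop :=
  forall s : R, objective nu sigma eps x t <= objective nu sigma eps x s.

Fixpoint num_diff (x y : list R) : nat :=
  match x, y with
  | a :: x', b :: y' => ((if Req_EM_T a b then 0 else 1) + num_diff x' y')%nat
  | _, _ => 0%nat
  end.

Definition replacement (X X' : list R) (m : nat) : Prop :=
  length X' = length X /\ (num_diff X X' <= m)%nat.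

Definition breaks (T : list R -> R) (X : list R) (m : nat) : Prop :=
  forall M : R, exists X', replacement X X' m /\ M < Rabs (T X').

(* m is the least number of replaced points causing breakdown; the
   finite-sample replacement breakdown point is then m / length X *)
Definition breakdown_count (T : list R -> R) (X : list R) (m : nat) : Prop :=
  breaks T X m /\ forall k, (k < m)%nat -> ~ breaks T X k.

(* Up to an additive constant, rho((x - t)/sigma) is squeezed around the symmetric
   Cauchy-type loss h(u) = c log(1 + u^2/w), which is subadditive up to the constant
   c log 2 and has bounded sublevel sets.  Compare the objective at the estimate t
   with its value at a reference point.  If fewer than half of the points are
   replaced, each kept point contributes at least h(t) minus a constant and each
   replaced point at least -h(t) minus a constant, so h(t), hence |t|, stays bounded.
   If more than half are replaced by one far value y, the same comparison with y
   bounds h(t - y), so t follows y to infinity.  Thus the least breaking count m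
   satisfies n <= 2m <= n + 2. *)

From Stdlib Require Import Reals Lra Lia List Arith ClassicalEpsilon Wf_nat.
Open Scope R_scope.

Lemma ln_le_compat x y : 0 < x -> x <= y -> ln x <= ln y.
Proof.
  intros Hx [Hlt|<-]; [left; apply ln_increasing; assumption | right; reflexivity].
Qed.

Definition cauchy_loss (w u : R) : R := ln (1 + u ^ 2 / w).

Section CauchyLoss.

Variable w : R.
Hypothesis w_pos : 0 < w.

Lemma sq_div_nonneg u : 0 <= u ^ 2 / w.
Proof. unfold Rdiv; apply Rmult_le_pos; [apply pow2_ge_0 | left; apply Rinv_0_lt_compat, w_pos]. Qed.

Lemma cauchy_loss_nonneg u : 0 <= cauchy_loss w u.
Proof. rewrite <- ln_1; apply ln_le_compat; pose proof (sq_div_nonneg u); lra. Qed.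

Lemma cauchy_loss_opp u : cauchy_loss w (- u) = cauchy_loss w u.
Proof. unfold cauchy_loss; f_equal; f_equal; f_equal; ring. Qed.

(* From [(a + b)^2 <= 2 a^2 + 2 b^2] and [1 + 2p + 2q <= 2 (1 + p) (1 + q)]. *)
Lemma cauchy_loss_add_le a b :
  cauchy_loss w (a + b) <= cauchy_loss w a + cauchy_loss w b + ln 2.
Proof.
  unfold cauchy_loss.
  pose proof (sq_div_nonneg a) as Ha; pose proof (sq_div_nonneg b) as Hb.
  assert (Hab : (a + b) ^ 2 / w <= 2 * (a ^ 2 / w) + 2 * (b ^ 2 / w)).
  { unfold Rdiv; pose proof (Rinv_0_lt_compat w w_pos).
    pose proof (pow2_ge_0 (a - b)); nra. }
  rewrite <- !ln_mult by nra.
  apply ln_le_compat; pose proof (sq_div_nonneg (a + b)); nra.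
Qed.

Lemma cauchy_loss_le_bound C u : cauchy_loss w u <= C -> Rabs u <= sqrt (w * exp C).
Proof.
  intros Hu.
  assert (Hexp : 1 + u ^ 2 / w <= exp C).
  { destruct (Rle_or_lt (1 + u ^ 2 / w) (exp C)) as [Hle|Hgt]; [exact Hle|].
    apply ln_increasing in Hgt; [|apply exp_pos]; rewrite ln_exp in Hgt.
    unfold cauchy_loss in Hu; lra. }
  assert (Hsq : u ^ 2 <= w * exp C).
  { apply (Rmult_le_compat_l w) in Hexp; [|lra].
    unfold Rdiv in Hexp; rewrite Rmult_plus_distr_l, (Rmult_comm (u ^ 2)), <- Rmult_assoc,
      Rinv_r, Rmult_1_l in Hexp by lra.
    lra. }
  rewrite <- sqrt_Rsqr_abs; apply sqrt_le_1_alt; unfold Rsqr; lra.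
Qed.

Lemma cauchy_loss_rescale v u : 0 < v <= w ->
  cauchy_loss w u <= cauchy_loss v u <= cauchy_loss w u + ln (w / v).
Proof.
  intros [Hv Hvw]; unfold cauchy_loss.
  pose proof (sq_div_nonneg u) as Hw.
  assert (Hratio : 1 <= w / v) by (apply (Rmult_le_reg_r v); [lra|]; field_simplify; lra).
  assert (Hvw' : u ^ 2 / w <= u ^ 2 / v).
  { apply Rmult_le_compat_l; [apply pow2_ge_0|]. apply Rinv_le_contravar; lra. }
  assert (Hscale : u ^ 2 / v = w / v * (u ^ 2 / w)) by (field; lra).
  split.
  - apply ln_le_compat; lra.
  - rewrite <- ln_mult by lra. apply ln_le_compat; [lra|]. rewrite Hscale; nra.
Qed.

End CauchyLoss.

Lemma skew_factor_bounds eps v : -1 < eps < 1 ->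
  0 < 1 - Rabs eps /\ 1 - Rabs eps <= 1 - sgn v * eps <= 2.
Proof. intros He; unfold sgn, Rabs; destruct Rle_dec, Rcase_abs; lra. Qed.

Lemma rho_div_eq nu sigma eps u : 0 < nu -> 0 < sigma -> -1 < eps < 1 ->
  rho nu eps (u / sigma)
  = (nu + 1) / 2 * cauchy_loss (nu * sigma ^ 2 * (1 - sgn (u / sigma) * eps) ^ 2) u.
Proof.
  intros Hnu Hs He; destruct (skew_factor_bounds eps (u / sigma) He) as [Hpos [Hlo _]].
  unfold rho, cauchy_loss; do 3 f_equal; field; split; lra.
Qed.

Lemma rho_div_bounds nu sigma eps u : 0 < nu -> 0 < sigma -> -1 < eps < 1 ->
  (nu + 1) / 2 * cauchy_loss (4 * nu * sigma ^ 2) u <= rho nu eps (u / sigma)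
  <= (nu + 1) / 2 * cauchy_loss (4 * nu * sigma ^ 2) u
     + (nu + 1) / 2 * ln (4 / (1 - Rabs eps) ^ 2).
Proof.
  intros Hnu Hs He; rewrite rho_div_eq by assumption.
  destruct (skew_factor_bounds eps (u / sigma) He) as [Hpos [Hlo Hhi]].
  set (s := 1 - sgn (u / sigma) * eps) in *.
  assert (Hns : 0 < nu * sigma ^ 2) by (apply Rmult_lt_0_compat; [lra | apply pow_lt; lra]).
  assert (Hv : 0 < nu * sigma ^ 2 * s ^ 2 <= 4 * nu * sigma ^ 2).
  { split; [apply Rmult_lt_0_compat; [lra | apply pow_lt; lra]|]. assert (s ^ 2 <= 4) by nra; nra. }
  destruct (cauchy_loss_rescale (4 * nu * sigma ^ 2) ltac:(lra) _ u Hv) as [H1 H2].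
  assert (Hratio : ln (4 * nu * sigma ^ 2 / (nu * sigma ^ 2 * s ^ 2)) <= ln (4 / (1 - Rabs eps) ^ 2)).
  { replace (4 * nu * sigma ^ 2 / (nu * sigma ^ 2 * s ^ 2)) with (4 / s ^ 2) by (field; lra).
    apply ln_le_compat; [apply Rdiv_lt_0_compat; [lra | apply pow_lt; lra]|].
    apply Rmult_le_compat_l; [lra|]; apply Rinv_le_contravar; [apply pow_lt; lra|]; nra. }
  split; [apply Rmult_le_compat_l; lra|].
  rewrite <- Rmult_plus_distr_l; apply Rmult_le_compat_l; lra.
Qed.

Lemma num_diff_refl X : num_diff X X = 0%nat.
Proof.
  induction X as [|x X IH]; simpl; [reflexivity|].
  destruct (Req_EM_T x x); [rewrite IH; reflexivity|congruence].
Qed.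

Lemma num_diff_repeat_skipn y m X : (num_diff X (repeat y m ++ skipn m X) <= m)%nat.
Proof.
  revert X; induction m as [|m IH]; intros X.
  - rewrite num_diff_refl; lia.
  - destruct X as [|x X]; simpl; [lia|].
    specialize (IH X); destruct Req_EM_T; lia.
Qed.

Lemma breakdown_count_le (T : list R -> R) X j :
  breaks T X j -> exists m, breakdown_count T X m /\ (m <= j)%nat.
Proof.
  intros Hj.
  destruct (dec_inh_nat_subset_has_unique_least_element (breaks T X))
    as [m [[Hm Hleast] _]]; [intros k; apply classic | exists j; exact Hj |].
  exists m; split; [split; [exact Hm|] | exact (Hleast j Hj)].
  intros k Hk Hbk; specialize (Hleast k Hbk); lia.
Qed.

Lemma Un_cv_half (b : nat -> nat) :
  (forall n, (1 <= n)%nat -> (n <= 2 * b n <= n + 2)%nat) ->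
  Un_cv (fun n => INR (b n) / INR n) (1 / 2).
Proof.
  intros Hb e He.
  destruct (archimed_cor1 e He) as [N [HN HN0]].
  exists N; intros n Hn; unfold R_dist.
  destruct (Hb n ltac:(lia)) as [Hlo Hhi].
  apply le_INR in Hlo, Hhi; rewrite mult_INR, ?plus_INR in *; simpl INR in Hlo, Hhi.
  assert (Hn0 : 0 < INR n) by (apply lt_0_INR; lia).
  assert (Hinv : / INR n <= / INR N) by (apply Rinv_le_contravar; [apply lt_0_INR|apply le_INR]; lia).
  assert (Hdist : Rabs (INR (b n) / INR n - 1 / 2) <= / INR n).
  { assert (Hq : INR n * / INR n = 1) by (field; lra).
    assert (0 < / INR n) by (apply Rinv_0_lt_compat; lra).
    unfold Rdiv; apply Rabs_le; split; nra. }
  lra.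
Qed.

Section QuasiSubadditiveLoss.

Variables (r h : R -> R) (K D : R).
Hypothesis h_nonneg : forall u, 0 <= h u.
Hypothesis h_opp : forall u, h (- u) = h u.
Hypothesis h_add_le : forall a b, h (a + b) <= h a + h b + K.
Hypothesis h_coercive : forall C, exists M, forall u, h u <= C -> Rabs u <= M.
Hypothesis r_ge : forall u, h u <= r u.
Hypothesis r_le : forall u, r u <= h u + D.

Definition loss_sum (x : list R) (t : R) : R :=
  fold_right (fun xi acc => r (xi - t) + acc) 0 x.

Definition minimizes (x : list R) (t : R) : Prop :=
  forall s, loss_sum x t <= loss_sum x s.

Lemma D_nonneg : 0 <= D.
Proof. pose proof (r_ge 0); pose proof (r_le 0); lra. Qed.

Lemma r_shift u v : r u <= r v + h (u - v) + K + D.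
Proof.
  pose proof (h_add_le v (u - v)) as Hadd; replace (v + (u - v)) with u in Hadd by ring.
  pose proof (r_le u); pose proof (r_ge v); lra.
Qed.

Lemma loss_sum_app x y t : loss_sum (x ++ y) t = loss_sum x t + loss_sum y t.
Proof. induction x as [|a x IH]; simpl; [|rewrite IH]; ring. Qed.

Lemma loss_sum_repeat y m t : loss_sum (repeat y m) t = INR m * r (y - t).
Proof. induction m as [|m IH]; simpl repeat; [simpl; ring|]. rewrite S_INR; simpl; rewrite IH; ring. Qed.

Lemma loss_sum_shift_le L y t :
  loss_sum L y <= loss_sum L t + INR (length L) * (h (t - y) + K + D).
Proof.
  induction L as [|x L IH]; simpl length; [simpl; lra|].
  rewrite S_INR; simpl loss_sum.
  pose proof (r_shift (x - y) (x - t)) as Hx; replace (x - y - (x - t)) with (t - y) in Hx by ring.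
  lra.
Qed.

Lemma minimizer_near_cluster y m L t : (length L < m)%nat ->
  minimizes (repeat y m ++ L) t -> h (t - y) <= INR m * r 0 + INR (length L) * (K + D).
Proof.
  intros HLm Hmin; specialize (Hmin y).
  rewrite !loss_sum_app, !loss_sum_repeat, Rminus_diag in Hmin.
  pose proof (loss_sum_shift_le L y t).
  pose proof (r_ge (y - t)) as Hyt; rewrite <- (h_opp (y - t)), Ropp_minus_distr in Hyt.
  assert (INR (length L) + 1 <= INR m) by (rewrite <- S_INR; apply le_INR; lia).
  pose proof (pos_INR (length L)); pose proof (h_nonneg (t - y)).
  nra.
Qed.

Definition sample_cost (X : list R) : R :=
  fold_right (fun x acc => h x + r x + K + D + acc) 0 X.

Lemma r_gain_fixed x t : r (x - t) - r (x - 0) >= h t - (h x + r x + K + D).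
Proof.
  pose proof (h_add_le (x - t) (- x)) as Hadd.
  replace (x - t + - x) with (- t) in Hadd by ring; rewrite !h_opp in Hadd.
  rewrite Rminus_0_r; pose proof (r_ge (x - t)); pose proof D_nonneg; lra.
Qed.

Lemma r_gain_moved y x t : r (y - t) - r (y - 0) >= - h t - (h x + r x + K + D).
Proof.
  pose proof (r_shift (y - 0) (y - t)) as Hs; replace (y - 0 - (y - t)) with t in Hs by ring.
  pose proof (h_nonneg x); pose proof (r_ge x); lra.
Qed.

(* Kept points pull the objective up by h t, replaced points down by at most h t. *)
Lemma loss_sum_replaced_ge X X' t : length X = length X' ->
  loss_sum X' t - loss_sum X' 0
  >= (INR (length X) - 2 * INR (num_diff X X')) * h t - sample_cost X.
Proof.
  revert X'; induction X as [|x X IH]; intros [|y X'] Hl; simpl in Hl; try discriminate.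
  - simpl; lra.
  - injection Hl as Hl; specialize (IH X' Hl).
    cbn [num_diff length loss_sum sample_cost fold_right]; rewrite plus_INR, S_INR.
    destruct (Req_EM_T x y) as [<-|_]; simpl INR.
    + pose proof (r_gain_fixed x t); unfold loss_sum, sample_cost in IH; lra.
    + pose proof (r_gain_moved y x t); unfold loss_sum, sample_cost in IH; lra.
Qed.

Section Estimator.

Variable T : list R -> R.
Hypothesis T_min : forall x, x <> nil -> minimizes x (T x).

Lemma breaks_of_majority X m : (length X < 2 * m)%nat -> (m <= length X)%nat -> breaks T X m.
Proof.
  intros Hmaj Hm M.
  set (L := skipn m X).
  assert (Hlen : length L = (length X - m)%nat) by apply length_skipn.
  destruct (h_coercive (INR m * r 0 + INR (length L) * (K + D))) as [Mc HMc].
  set (y := Rabs M + Rabs Mc + 1).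
  exists (repeat y m ++ L); split.
  - split; [rewrite length_app, repeat_length; lia | apply num_diff_repeat_skipn].
  - assert (Hne : repeat y m ++ L <> nil).
    { intros Hnil; apply (f_equal (@length R)) in Hnil.
      rewrite length_app, repeat_length in Hnil; simpl in Hnil; lia. }
    pose proof (HMc _ (minimizer_near_cluster y m L _ ltac:(lia) (T_min _ Hne))) as Hclose.
    pose proof (Rabs_triang_inv y (T (repeat y m ++ L))) as Htri.
    rewrite Rabs_minus_sym in Hclose.
    pose proof (Rle_abs M); pose proof (Rle_abs Mc); pose proof (Rabs_pos M);
    rewrite (Rabs_pos_eq y) in Htri by (pose proof (Rabs_pos Mc); unfold y; lra).
    unfold y in *; lra.
Qed.

Lemma not_breaks_of_minority X m : (2 * m < length X)%nat -> ~ breaks T X m.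
Proof.
  intros Hmin Hbr.
  destruct (h_coercive (sample_cost X)) as [Mc HMc].
  destruct (Hbr Mc) as [X' [[Hl Hd] Hlt]].
  assert (Hne : X' <> nil) by (intros ->; simpl in Hl; lia).
  pose proof (T_min X' Hne 0) as Hopt.
  pose proof (loss_sum_replaced_ge X X' (T X') (eq_sym Hl)) as Hgain.
  assert (Hmaj : 1 <= INR (length X) - 2 * INR (num_diff X X')).
  { assert (Hnat : (2 * num_diff X X' + 1 <= length X)%nat) by lia.
    apply le_INR in Hnat; rewrite plus_INR, mult_INR in Hnat; simpl INR in Hnat; lra. }
  pose proof (h_nonneg (T X')).
  assert (Habs : Rabs (T X') <= Mc) by (apply HMc; nra).
  lra.
Qed.

Lemma breakdown_count_bounds X : (1 <= length X)%nat ->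
  exists b, breakdown_count T X b /\ (length X <= 2 * b <= length X + 2)%nat.
Proof.
  intros Hn.
  set (n := length X) in *.
  set (j := S (n / 2)).
  assert (Hj : (n < 2 * j <= n + 2)%nat).
  { pose proof (Nat.div_mod n 2 ltac:(lia)); pose proof (Nat.mod_upper_bound n 2 ltac:(lia)).
    unfold j; lia. }
  destruct (breakdown_count_le T X j (breaks_of_majority X j ltac:(lia) ltac:(lia)))
    as [b [Hb Hbj]].
  exists b; split; [exact Hb|].
  split; [|lia].
  destruct (le_lt_dec n (2 * b)) as [Hle|Hlt]; [exact Hle|].
  exfalso; exact (not_breaks_of_minority X b Hlt (proj1 Hb)).
Qed.

Lemma breakdown_point_half (X : nat -> list R) : (forall n, length (X n) = n) ->
  exists bd : nat -> nat,
    (forall n, (1 <= n)%nat -> breakdown_count T (X n) (bd n)) /\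
    Un_cv (fun n => INR (bd n) / INR n) (1 / 2).
Proof.
  intros HX.
  destruct (choice (fun n b => (1 <= n)%nat ->
              breakdown_count T (X n) b /\ (n <= 2 * b <= n + 2)%nat)) as [bd Hbd].
  { intros n; destruct (le_lt_dec 1 n) as [Hn|Hn]; [|exists 0%nat; lia].
    destruct (breakdown_count_bounds (X n) ltac:(rewrite HX; lia)) as [b Hb].
    rewrite HX in Hb; exists b; intros _; exact Hb. }
  exists bd; split.
  - intros n Hn; exact (proj1 (Hbd n Hn)).
  - apply Un_cv_half; intros n Hn; exact (proj2 (Hbd n Hn)).
Qed.

End Estimator.

End QuasiSubadditiveLoss.

Theorem corollary3p6 (nu sigma eps : R)
  (Hnu : 0 < nu) (Hsigma : 0 < sigma) (Heps : -1 < eps < 1)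
  (T : list R -> R)
  (HT : forall x : list R, x <> nil -> is_minimizer nu sigma eps x (T x))
  (X : nat -> list R) (HX : forall n, length (X n) = n) :
  exists bd : nat -> nat,
    (forall n, (1 <= n)%nat -> breakdown_count T (X n) (bd n)) /\
    Un_cv (fun n => INR (bd n) / INR n) (1 / 2).
Proof.
  set (c := (nu + 1) / 2).
  set (w := 4 * nu * sigma ^ 2).
  assert (Hc : 0 < c) by (unfold c; lra).
  assert (Hw : 0 < w) by (unfold w; apply Rmult_lt_0_compat; [lra | apply pow_lt; lra]).
  apply (breakdown_point_half (fun u => rho nu eps (u / sigma)) (fun u => c * cauchy_loss w u)
           (c * ln 2) (c * ln (4 / (1 - Rabs eps) ^ 2))); try assumption.
  - intros u; apply Rmult_le_pos; [lra | apply cauchy_loss_nonneg; exact Hw].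
  - intros u; rewrite cauchy_loss_opp; reflexivity.
  - intros a b; pose proof (cauchy_loss_add_le w Hw a b); nra.
  - intros C; exists (sqrt (w * exp (C / c))); intros u Hu.
    apply (cauchy_loss_le_bound w Hw).
    apply (Rmult_le_reg_l c); [exact Hc|]; field_simplify; lra.
  - intros u; exact (proj1 (rho_div_bounds nu sigma eps u Hnu Hsigma Heps)).
  - intros u; exact (proj2 (rho_div_bounds nu sigma eps u Hnu Hsigma Heps)).
Qed.
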